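(* Let $G$ be a $\sigma$-compact locally compact Abelian group, $\Lambda\subset G$ a subset of a model set, and $F\subset G$ a finite nonempty set. Then $\Lambda+F$ is a subset of a model set.
   Context: A cut and project scheme $(G\times H,\widetilde L)$: $H$ a locally compact Abelian group, $\widetilde L\subset G\times H$ a discrete cocompact subgroup with $\pi_1|_{\widetilde L}$ injective and $\pi_2(\widetilde L)$ dense in $H$; $x^\star:=\pi_2((\pi_1|_{\widetilde L})^{-1}(x))$. A model set is $\Lambda(W):=\{x\in\pi_1(\widetilde L):x^\star\in W\}$ for some cut and project scheme and some precompact $W\subset H$ with nonempty interior. *)

From Stdlib Require Import List.
Set Implicit Arguments.

Definition subset {T : Type} (A B : T -> Prop) : Prop := forall x, A x -> B x.

Section Topology.
Variable T : Type.
Variable O : (T -> Prop) -> Prop.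

Definition is_topology : Prop :=
  O (fun _ => True) /\
  (forall Fam : (T -> Prop) -> Prop,
      (forall U, Fam U -> O U) -> O (fun x => exists U, Fam U /\ U x)) /\
  (forall U V, O U -> O V -> O (fun x => U x /\ V x)).

Definition hausdorff : Prop :=
  forall x y, x <> y -> exists U V, O U /\ O V /\ U x /\ V y /\
                        (forall z, U z -> V z -> False).

Definition compact (K : T -> Prop) : Prop :=
  forall Fam : (T -> Prop) -> Prop,
    (forall U, Fam U -> O U) ->
    (forall x, K x -> exists U, Fam U /\ U x) ->
    exists l : list (T -> Prop),
      (forall U, In U l -> Fam U) /\
      (forall x, K x -> exists U, In U l /\ U x).

Definition closure (A : T -> Prop) : T -> Prop :=
  fun x => forall U, O U -> U x -> exists y, U y /\ A y.

Definition precompact (A : T -> Prop) : Prop := compact (closure A).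

Definition nonempty_interior (A : T -> Prop) : Prop :=
  exists U, O U /\ (exists x, U x) /\ subset U A.

Definition dense (D : T -> Prop) : Prop :=
  forall U, O U -> (exists x, U x) -> exists y, U y /\ D y.

Definition locally_compact : Prop :=
  forall x, exists U K, O U /\ U x /\ subset U K /\ compact K.

Definition sigma_compact : Prop :=
  exists K : nat -> T -> Prop, (forall n, compact (K n)) /\ forall x, exists n, K n x.

End Topology.

Definition prod_open {A B : Type} (OA : (A -> Prop) -> Prop)
  (OB : (B -> Prop) -> Prop) (W : A * B -> Prop) : Prop :=
  forall p, W p -> exists U V, OA U /\ OB V /\ U (fst p) /\ V (snd p) /\
              (forall a b, U a -> V b -> W (a, b)).

Record TopAbGroup := {
  carrier :> Type;
  zero : carrier;
  add : carrier -> carrier -> carrier;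
  opp : carrier -> carrier;
  opens : (carrier -> Prop) -> Prop
}.

Arguments zero {_}.
Arguments add {_} _ _.
Arguments opp {_} _.
Arguments opens {_} _.

Definition is_LCA (G : TopAbGroup) : Prop :=
  (forall x y z : G, add x (add y z) = add (add x y) z) /\
  (forall x y : G, add x y = add y x) /\
  (forall x : G, add zero x = x) /\
  (forall x : G, add (opp x) x = zero) /\
  is_topology (@opens G) /\
  hausdorff (@opens G) /\
  (forall W, opens W -> prod_open (@opens G) (@opens G) (fun p => W (add (fst p) (snd p)))) /\
  (forall W, opens W -> opens (fun x : G => W (opp x))) /\
  locally_compact (@opens G).

Section CPS.
Variables G H : TopAbGroup.

Definition pair_add (p q : G * H) : G * H := (add (fst p) (fst q), add (snd p) (snd q)).
Definition pair_opp (p : G * H) : G * H := (opp (fst p), opp (snd p)).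
Definition GH_open : (G * H -> Prop) -> Prop := prod_open (@opens G) (@opens H).

Definition is_subgroup (L : G * H -> Prop) : Prop :=
  L (zero, zero) /\ (forall p q, L p -> L q -> L (pair_add p q)) /\
  (forall p, L p -> L (pair_opp p)).

Definition discrete_sub (L : G * H -> Prop) : Prop :=
  forall l, L l -> exists U, GH_open U /\ U l /\ (forall m, L m -> U m -> m = l).

(* (G x H)/L is compact for the quotient topology: the open sets of the
   quotient correspond to the L-saturated open sets of G x H. *)
Definition cocompact (L : G * H -> Prop) : Prop :=
  forall Fam : (G * H -> Prop) -> Prop,
    (forall U, Fam U -> GH_open U /\
                        (forall p l, U p -> L l -> U (pair_add p l))) ->
    (forall p, exists U, Fam U /\ U p) ->
    exists l : list (G * H -> Prop),
      (forall U, In U l -> Fam U) /\ (forall p, exists U, In U l /\ U p).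

Definition cut_and_project_scheme (L : G * H -> Prop) : Prop :=
  is_LCA H /\ is_subgroup L /\ discrete_sub L /\ cocompact L /\
  (forall p q, L p -> L q -> fst p = fst q -> p = q) /\
  dense (@opens H) (fun h => exists l, L l /\ snd l = h).

(* Lambda(W) = { x in pi1(L) : x^star in W }; since pi1 is injective on L,
   x^star is the second coordinate of the unique l in L with first coord x. *)
Definition model_set_of (L : G * H -> Prop) (W : H -> Prop) : G -> Prop :=
  fun x => exists l, L l /\ fst l = x /\ W (snd l).

End CPS.

Definition is_model_set (G : TopAbGroup) (M : G -> Prop) : Prop :=
  exists (H : TopAbGroup) (L : G * H -> Prop) (W : H -> Prop),
    @cut_and_project_scheme G H L /\ precompact (@opens H) W /\
    nonempty_interior (@opens H) W /\ (forall x, M x <-> @model_set_of G H L W x).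

Definition subset_of_model_set (G : TopAbGroup) (S : G -> Prop) : Prop :=
  exists M : G -> Prop, @is_model_set G M /\ subset S M.

Definition sumset (G : TopAbGroup) (A B : G -> Prop) : G -> Prop :=
  fun z => exists x y, A x /\ B y /\ z = add x y.

Definition finite_set {T : Type} (F : T -> Prop) : Prop :=
  exists l : list T, forall x, F x <-> In x l.

(* It suffices to enlarge the cut and project scheme until every f in F lies in pi1(L):
   then Lambda + F is contained in the model set of the union of the translates W + f*,
   and a finite union of translates of W is again precompact with nonempty interior.
   To adjoin one point f, let cZ be the subgroup of those n with n f in pi1(L), and pick
   u with (c f, u) in L.  Replace H by H' = (H x Z)/<(u, -c)>, an extension of H by the
   discrete group Z/cZ, and L by {(x + n f, [h, n]) | (x, h) in L, n in Z}.  This is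
   again a cut and project scheme, f lies in its first projection, and the model set of
   W is contained in that of W x {0}. *)

From Stdlib Require Import List ZArith Lia Wf_nat.
From Stdlib Require Import Classical FunctionalExtensionality PropExtensionality ProofIrrelevance.

Class abelian_group (T : TopAbGroup) : Prop := {
  add_assoc : forall x y z : T, add x (add y z) = add (add x y) z;
  add_comm : forall x y : T, add x y = add y x;
  add_0_l : forall x : T, add zero x = x;
  add_opp_l : forall x : T, add (opp x) x = zero }.

Lemma LCA_abelian_group (T : TopAbGroup) : is_LCA T -> abelian_group T.
Proof. intros (assoc & comm & zero_l & opp_l & _). now constructor. Qed.

Section AbelianGroup.
Context {T : TopAbGroup} `{abelian_group T}.

Lemma add_0_r (x : T) : add x zero = x.
Proof. now rewrite add_comm, add_0_l. Qed.

Lemma add_opp_r (x : T) : add x (opp x) = zero.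
Proof. now rewrite add_comm, add_opp_l. Qed.

Lemma add_shuffle0 (x y z : T) : add (add x y) z = add (add x z) y.
Proof. now rewrite <- !add_assoc, (add_comm y). Qed.

Lemma add_shuffle1 (a b c d : T) : add (add a b) (add c d) = add (add a c) (add b d).
Proof. now rewrite !add_assoc, (add_shuffle0 a b c). Qed.

Lemma add_sub_cancel (x y : T) : add (add x y) (opp y) = x.
Proof. now rewrite <- add_assoc, add_opp_r, add_0_r. Qed.

Lemma sub_add_cancel (x y : T) : add (add x (opp y)) y = x.
Proof. now rewrite <- add_assoc, add_opp_l, add_0_r. Qed.

Lemma add_eq_sub_swap (a b c d : T) : add a b = add c d -> add b (opp d) = add c (opp a).
Proof.
  intros E. transitivity (add (add (add a b) (opp a)) (opp d)).
  - now rewrite (add_comm a b), add_sub_cancel.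
  - now rewrite E, add_shuffle0, add_sub_cancel.
Qed.

Lemma opp_unique (x y : T) : add x y = zero -> y = opp x.
Proof.
  intros E. rewrite <- (add_0_l y), <- (add_opp_l x), <- add_assoc, E.
  apply add_0_r.
Qed.

Lemma opp_0 : opp (zero : T) = zero.
Proof. symmetry; apply opp_unique, add_0_l. Qed.

Lemma opp_add (x y : T) : opp (add x y) = add (opp x) (opp y).
Proof.
  symmetry; apply opp_unique.
  now rewrite add_shuffle1, !add_opp_r, add_0_l.
Qed.

Fixpoint nmul (n : nat) (x : T) : T :=
  match n with O => zero | S m => add (nmul m x) x end.

Definition zmul (z : Z) (x : T) : T :=
  match z with
  | Z0 => zero
  | Zpos p => nmul (Pos.to_nat p) x
  | Zneg p => opp (nmul (Pos.to_nat p) x)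
  end.

Lemma zmul_succ (z : Z) (x : T) : zmul (z + 1) x = add (zmul z x) x.
Proof.
  destruct z as [|p|p]; simpl.
  - now rewrite add_0_l.
  - now rewrite Pos2Nat.inj_add, Nat.add_1_r.
  - destruct (Pos.eq_dec p 1) as [->|Hp]; simpl.
    + now rewrite add_0_l, add_opp_l.
    + rewrite Z.pos_sub_lt by lia. simpl.
      replace (Pos.to_nat p) with (S (Pos.to_nat (p - 1))) at 1 by lia.
      simpl. now rewrite opp_add, sub_add_cancel.
Qed.

Lemma zmul_pred (z : Z) (x : T) : zmul (z - 1) x = add (zmul z x) (opp x).
Proof.
  rewrite <- (add_sub_cancel (zmul (z - 1) x) x), <- zmul_succ.
  now replace (z - 1 + 1)%Z with z by lia.
Qed.

Lemma zmul_add (a b : Z) (x : T) : zmul (a + b) x = add (zmul a x) (zmul b x).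
Proof.
  induction b using Z.peano_ind.
  - now rewrite Z.add_0_r, add_0_r.
  - now rewrite <- !Z.add_1_r, Z.add_assoc, !zmul_succ, IHb, add_assoc.
  - now rewrite <- !Z.sub_1_r, Z.add_sub_assoc, !zmul_pred, IHb, add_assoc.
Qed.

Lemma zmul_opp (a : Z) (x : T) : zmul (- a) x = opp (zmul a x).
Proof. apply opp_unique. now rewrite <- zmul_add, Z.add_opp_diag_r. Qed.

Lemma zmul_mul (a b : Z) (x : T) : zmul (a * b) x = zmul a (zmul b x).
Proof.
  induction a using Z.peano_ind.
  - reflexivity.
  - now rewrite <- Z.add_1_r, Z.mul_add_distr_r, zmul_add, zmul_succ, IHa, Z.mul_1_l.
  - rewrite <- Z.sub_1_r, Z.mul_sub_distr_r, Z.mul_1_l, <- Z.add_opp_r.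
    now rewrite zmul_add, zmul_pred, IHa, zmul_opp.
Qed.

Lemma zmul_0_r (a : Z) : zmul a (zero : T) = zero.
Proof.
  induction a using Z.peano_ind.
  - reflexivity.
  - now rewrite <- Z.add_1_r, zmul_succ, IHa, add_0_r.
  - now rewrite <- Z.sub_1_r, zmul_pred, IHa, opp_0, add_0_r.
Qed.

End AbelianGroup.

Lemma Z_subgroup_multiples (K : Z -> Prop) :
  K 0%Z -> (forall a b, K a -> K b -> K (a - b)%Z) ->
  exists c, (0 <= c)%Z /\ forall n, K n <-> (c | n)%Z.
Proof.
  intros K0 Ksub.
  assert (Kopp : forall a, K a -> K (- a)%Z).
  { intros a Ka. rewrite <- Z.sub_0_l. auto. }
  assert (Kmul : forall k a, K a -> K (k * a)%Z).
  { intros k a Ka. induction k using Z.peano_ind.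
    - exact K0.
    - rewrite Z.mul_succ_l. replace (k * a + a)%Z with (k * a - - a)%Z by lia. auto.
    - rewrite Z.mul_pred_l. auto. }
  destruct (classic (exists m, K (Z.of_nat (S m)))) as [Hpos|Hnone].
  - destruct (dec_inh_nat_subset_has_unique_least_element _ (fun m => classic _) Hpos)
      as [m [[Km Hmin] _]].
    exists (Z.of_nat (S m)). split; [lia|]. intros n. split.
    + intros Kn. apply Z.mod_divide; [lia|].
      assert (Kr : K (n mod Z.of_nat (S m))%Z).
      { rewrite Z.mod_eq, Z.mul_comm by lia. auto. }
      pose proof (Z.mod_pos_bound n (Z.of_nat (S m)) ltac:(lia)).
      apply NNPP; intros Hr.
      specialize (Hmin (Z.to_nat (n mod Z.of_nat (S m)) - 1)).
      replace (Z.of_nat (S (Z.to_nat (n mod Z.of_nat (S m)) - 1))) with (n mod Z.of_nat (S m))%Z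
        in Hmin by lia.
      specialize (Hmin Kr). lia.
    + intros [k ->]. auto.
  - exists 0%Z. split; [lia|]. intros n. split.
    + intros Kn. replace n with 0%Z; [apply Z.divide_refl|].
      apply NNPP; intros Hn. apply Hnone.
      destruct (Z.lt_ge_cases n 0) as [Hlt|Hgt].
      * exists (Z.to_nat (- n) - 1)%nat.
        replace (Z.of_nat (S (Z.to_nat (- n) - 1))) with (- n)%Z by lia. auto.
      * exists (Z.to_nat n - 1)%nat.
        now replace (Z.of_nat (S (Z.to_nat n - 1))) with n by lia.
    + intros [k ->]. now rewrite Z.mul_0_r.
Qed.

Lemma list_choice {A B : Type} (P : A -> Prop) (R : A -> B -> Prop) (l : list B) :
  (forall b, In b l -> exists a, P a /\ R a b) ->
  exists l', (forall a, In a l' -> P a) /\ (forall b, In b l -> exists a, In a l' /\ R a b).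
Proof.
  induction l as [|b l IH]; intros Hl.
  - exists nil. split; intros; simpl in *; tauto.
  - destruct IH as [l' [Hl'P Hl'R]]; [intros; apply Hl; simpl; auto|].
    destruct (Hl b) as [a [Pa Rab]]; [simpl; auto|].
    exists (a :: l'). split.
    + intros a' [<-|?]; auto.
    + intros b' [<-|Hb']; [exists a; simpl; auto|].
      destruct (Hl'R b' Hb') as [a' [? ?]]. exists a'; simpl; auto.
Qed.

Lemma list_filter {A : Type} (P : A -> Prop) (l : list A) :
  exists l', (forall a, In a l' -> P a) /\ (forall a, In a l -> P a -> In a l').
Proof.
  induction l as [|a l [l' [Hl'P Hl'l]]].
  - exists nil; simpl; tauto.
  - destruct (classic (P a)).
    + exists (a :: l'). split; [intros b [<-|?]; auto|intros b [<-|?] ?; simpl; auto].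
    + exists l'. split; auto. intros b [<-|?] ?; [tauto|auto].
Qed.

Section Topology.
Variable T : Type.
Variable O : (T -> Prop) -> Prop.
Hypothesis HO : is_topology O.

Lemma pred_ext (U V : T -> Prop) : (forall x, U x <-> V x) -> U = V.
Proof.
  intros E. apply functional_extensionality; intro x.
  now apply propositional_extensionality.
Qed.

Lemma open_ext (U V : T -> Prop) : O U -> (forall x, U x <-> V x) -> O V.
Proof. intros HU E. now rewrite <- (pred_ext U V E). Qed.

Lemma open_full : O (fun _ => True).
Proof. apply HO. Qed.

Lemma open_inter (U V : T -> Prop) : O U -> O V -> O (fun x => U x /\ V x).
Proof. apply HO. Qed.

Lemma open_local (U : T -> Prop) :
  (forall x, U x -> exists V, O V /\ V x /\ subset V U) -> O U.
Proof.
  intros HU. destruct HO as [_ [Hunion _]].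
  apply open_ext with (fun x => exists V, (O V /\ subset V U) /\ V x).
  - apply Hunion. tauto.
  - intro x; split.
    + intros [V [[_ sVU] Vx]]; auto.
    + intros Ux. destruct (HU x Ux) as [V [? [? ?]]]. exists V; auto.
Qed.

Lemma open_const (P : Prop) : O (fun _ => P).
Proof.
  destruct (classic P) as [p|np].
  - apply (open_ext _ _ open_full). tauto.
  - apply open_local. tauto.
Qed.

Lemma closure_complement_open (A : T -> Prop) : O (fun x => ~ closure O A x).
Proof.
  apply open_local. intros x Hx.
  apply not_all_ex_not in Hx as [U HU].
  apply imply_to_and in HU as [OU HU]. apply imply_to_and in HU as [Ux HU].
  exists U. repeat split; auto. intros y Uy Cy.
  apply HU. destruct (Cy U OU Uy) as [z [Uz Az]]. exists z; auto.
Qed.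

Lemma closure_minimal (A C : T -> Prop) :
  O (fun x => ~ C x) -> subset A C -> subset (closure O A) C.
Proof.
  intros HC HAC x Hx. apply NNPP; intro nC.
  destruct (Hx _ HC nC) as [y [ny Ay]]. apply ny, HAC, Ay.
Qed.

Lemma compact_ext (K1 K2 : T -> Prop) : compact O K1 -> (forall x, K1 x <-> K2 x) -> compact O K2.
Proof. intros HK E. now rewrite <- (pred_ext K1 K2 E). Qed.

Lemma compact_closed_subset (K C : T -> Prop) :
  compact O K -> O (fun x => ~ C x) -> subset C K -> compact O C.
Proof.
  intros HK HC HCK Fam HF Hcov.
  destruct (HK (fun U => Fam U \/ U = (fun x => ~ C x))) as [l [Hl1 Hl2]].
  - intros U [?| ->]; auto.
  - intros x Kx. destruct (classic (C x)) as [Cx|nCx].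
    + destruct (Hcov x Cx) as [U [? ?]]; exists U; auto.
    + exists (fun x => ~ C x); auto.
  - destruct (list_filter Fam l) as [l' [H1 H2]].
    exists l'. split; auto. intros x Cx.
    destruct (Hl2 x (HCK x Cx)) as [U [inU Ux]].
    exists U; split; auto. apply H2; auto.
    destruct (Hl1 U inU) as [?| ->]; auto. contradiction.
Qed.

Lemma precompact_of_compact (A K : T -> Prop) :
  compact O K -> subset (closure O A) K -> precompact O A.
Proof.
  intros HK Hs. apply (compact_closed_subset K); auto.
  apply closure_complement_open.
Qed.

Lemma compact_union (K1 K2 : T -> Prop) :
  compact O K1 -> compact O K2 -> compact O (fun x => K1 x \/ K2 x).
Proof.
  intros H1 H2 Fam HF Hc.
  destruct (H1 Fam HF) as [l1 [A1 B1]]; [intros x Kx; apply Hc; auto|].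
  destruct (H2 Fam HF) as [l2 [A2 B2]]; [intros x Kx; apply Hc; auto|].
  exists (l1 ++ l2). split.
  - intros U HU. apply in_app_or in HU as [?|?]; auto.
  - intros x [Kx|Kx].
    + destruct (B1 x Kx) as [U [? ?]]. exists U; split; auto. apply in_or_app; auto.
    + destruct (B2 x Kx) as [U [? ?]]. exists U; split; auto. apply in_or_app; auto.
Qed.

Lemma compact_list_union {B : Type} (l : list B) (K : B -> T -> Prop) :
  (forall b, In b l -> compact O (K b)) -> compact O (fun x => exists b, In b l /\ K b x).
Proof.
  induction l as [|b l IH]; intros Hl.
  - intros Fam _ _. exists nil. simpl. firstorder.
  - apply compact_ext with (fun x => K b x \/ exists b', In b' l /\ K b' x).
    + apply compact_union; [apply Hl; simpl; auto|apply IH; intros; apply Hl; simpl; auto].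
    + intro x; split.
      * intros [?|[b' [? ?]]]; [exists b|exists b']; simpl; auto.
      * intros [b' [[<-|?] ?]]; auto. right; exists b'; auto.
Qed.
End Topology.

Lemma compact_image {A B : Type} (OA : (A -> Prop) -> Prop) (OB : (B -> Prop) -> Prop)
  (phi : A -> B) (Hphi : forall U, OB U -> OA (fun x => U (phi x))) (K : A -> Prop) :
  compact OA K -> compact OB (fun y => exists x, K x /\ y = phi x).
Proof.
  intros HK Fam HF Hc.
  destruct (HK (fun V => exists U, Fam U /\ V = (fun x => U (phi x)))) as [l [H1 H2]].
  - intros V [U [FU ->]]. apply Hphi, HF, FU.
  - intros x Kx. destruct (Hc (phi x)) as [U [FU Ux]]; [exists x; auto|].
    exists (fun x => U (phi x)). split; auto. exists U; auto.
  - destruct (list_choice Fam (fun U V => V = (fun x => U (phi x))) l) as [l' [A1 A2]].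
    { intros V HV. destruct (H1 V HV) as [U [? ?]]. exists U; auto. }
    exists l'. split; auto. intros y [x [Kx ->]].
    destruct (H2 x Kx) as [V [inV Vx]]. destruct (A2 V inV) as [U [inU ->]].
    exists U; auto.
Qed.

Section LCA.
Variable T : TopAbGroup.
Hypothesis HT : is_LCA T.

Lemma LCA_topology : is_topology (@opens T).
Proof. apply HT. Qed.
Lemma LCA_hausdorff : hausdorff (@opens T).
Proof. apply HT. Qed.
Lemma LCA_add_continuous (W : T -> Prop) :
  opens W -> prod_open (@opens T) (@opens T) (fun p => W (add (fst p) (snd p))).
Proof. apply HT. Qed.
Lemma LCA_opp_continuous (W : T -> Prop) : opens W -> opens (fun x : T => W (opp x)).
Proof. apply HT. Qed.
Lemma LCA_locally_compact : locally_compact (@opens T).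
Proof. apply HT. Qed.

Lemma translate_open (U : T -> Prop) (t : T) : opens U -> opens (fun x => U (add x t)).
Proof.
  intros HU. apply (open_local _ _ LCA_topology). intros x Ux.
  destruct (LCA_add_continuous U HU (x, t) Ux) as [A [B [OA [OB [Ax [Bt HAB]]]]]].
  exists A. repeat split; auto. intros y Ay. apply (HAB y t); auto.
Qed.

Lemma translate_compact (K : T -> Prop) (t : T) :
  compact (@opens T) K -> compact (@opens T) (fun x => K (add x (opp t))).
Proof.
  pose proof (LCA_abelian_group T HT).
  intros HK. apply compact_ext with (fun y => exists x, K x /\ y = add x t).
  - apply compact_image with (OA := @opens T); auto. intros U OU. now apply translate_open.
  - intro y; split.
    + intros [x [Kx ->]]. now rewrite add_sub_cancel.
    + intros Ky. exists (add y (opp t)). now rewrite sub_add_cancel.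
Qed.

Definition translates_union (W : T -> Prop) (l : list T) (h : T) : Prop :=
  exists t, In t l /\ W (add h (opp t)).

Lemma closure_translates_union (W : T -> Prop) (l : list T) :
  subset (closure (@opens T) (translates_union W l))
         (translates_union (closure (@opens T) W) l).
Proof.
  apply closure_minimal.
  - induction l as [|t l IH].
    + eapply open_ext; [exact (open_full _ _ LCA_topology)|]. firstorder.
    + eapply open_ext; [exact (open_inter _ _ LCA_topology _ _ IH
               (translate_open _ (opp t) (closure_complement_open _ _ LCA_topology W)))|].
      intros h; unfold translates_union; simpl; firstorder congruence.
  - intros h [t [Ht Wt]]. exists t. split; auto. intros U OU Ut. exists (add h (opp t)); auto.
Qed.

Lemma translates_union_precompact (W : T -> Prop) (l : list T) :
  precompact (@opens T) W -> precompact (@opens T) (translates_union W l).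
Proof.
  intros HW. apply (precompact_of_compact _ _ LCA_topology _ _
    (compact_list_union _ _ LCA_topology l _ (fun t _ => translate_compact _ t HW))).
  apply closure_translates_union.
Qed.

Lemma translates_union_interior (W : T -> Prop) (l : list T) (t : T) :
  In t l -> nonempty_interior (@opens T) W -> nonempty_interior (@opens T) (translates_union W l).
Proof.
  pose proof (LCA_abelian_group T HT).
  intros Ht [U [OU [[x Ux] sUW]]].
  exists (fun h => U (add h (opp t))). split; [now apply translate_open|split].
  - exists (add x t). now rewrite add_sub_cancel.
  - intros h Uh. exists t. split; auto.
Qed.
End LCA.

Arguments translates_union {T} W l h.

(** * The extension (H x Z)/<(u, -c)> *)

Lemma Z_mod_id_div_0 (r c : Z) : (r mod c = r)%Z -> (r / c = 0)%Z.
Proof.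
  intros E. pose proof (Z_div_mod_eq_full r c) as D. rewrite E in D.
  assert (Z0 : (c * (r / c) = 0)%Z) by lia.
  apply Z.mul_eq_0 in Z0 as [->|]; [apply Zdiv_0_r|auto].
Qed.

Section Extension.
Variable H : TopAbGroup.
Hypothesis HH : is_LCA H.
Variable c : Z.
Variable u : H.
Hypothesis Hu : c = 0%Z -> u = zero.

#[local] Instance ext_base_abelian : abelian_group H := LCA_abelian_group H HH.

(* Each class of (H x Z)/<(u, -c)> is represented by its unique element (h, r) with r
   reduced modulo c (for c = 0 every r is reduced); the topology is the product of that
   of H with the discrete topology on the residues. *)
Record ext_carrier := mk_ext { ext_h : H; ext_r : Z; ext_reduced : (ext_r mod c = ext_r)%Z }.

Lemma ext_eq (p q : ext_carrier) : ext_h p = ext_h q -> ext_r p = ext_r q -> p = q.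
Proof. destruct p, q; simpl; intros -> ->. f_equal. apply proof_irrelevance. Qed.

Definition ext_class (h : H) (n : Z) : ext_carrier :=
  mk_ext (add h (zmul (n / c) u)) (n mod c) (Zmod_mod n c).

Lemma ext_class_repr (p : ext_carrier) : ext_class (ext_h p) (ext_r p) = p.
Proof.
  apply ext_eq; simpl; [|apply ext_reduced].
  rewrite Z_mod_id_div_0 by apply ext_reduced. apply add_0_r.
Qed.

Lemma ext_class_surj (p : ext_carrier) : exists h n, p = ext_class h n.
Proof. exists (ext_h p), (ext_r p). now rewrite ext_class_repr. Qed.

Lemma ext_class_shift (h : H) (n k : Z) :
  ext_class h (n + k * c) = ext_class (add h (zmul k u)) n.
Proof.
  apply ext_eq; simpl; [|apply Z_mod_plus_full].
  destruct (Z.eq_dec c 0) as [E|nz].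
  - now rewrite (Hu E), !zmul_0_r, !add_0_r.
  - now rewrite Z_div_plus_full, zmul_add, add_assoc, (add_shuffle0 h) by auto.
Qed.

Definition ext_zero : ext_carrier := ext_class zero 0.
Definition ext_add (p q : ext_carrier) : ext_carrier :=
  ext_class (add (ext_h p) (ext_h q)) (ext_r p + ext_r q).
Definition ext_opp (p : ext_carrier) : ext_carrier :=
  ext_class (opp (ext_h p)) (- ext_r p).
Definition ext_open (S : ext_carrier -> Prop) : Prop :=
  forall r (pr : (r mod c = r)%Z), opens (fun h => S (mk_ext h r pr)).

Definition ext_group : TopAbGroup :=
  @Build_TopAbGroup ext_carrier ext_zero ext_add ext_opp ext_open.

Lemma ext_class_add (h1 h2 : H) (n1 n2 : Z) :
  @add ext_group (ext_class h1 n1) (ext_class h2 n2) = ext_class (add h1 h2) (n1 + n2).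
Proof.
  replace (n1 + n2)%Z with (n1 mod c + n2 mod c + (n1 / c + n2 / c) * c)%Z
    by (pose proof (Z_div_mod_eq_full n1 c); pose proof (Z_div_mod_eq_full n2 c); lia).
  rewrite ext_class_shift. unfold add; simpl; unfold ext_add; simpl.
  now rewrite zmul_add, add_shuffle1.
Qed.

Lemma ext_class_opp (h : H) (n : Z) :
  @opp ext_group (ext_class h n) = ext_class (opp h) (- n).
Proof.
  replace (- n)%Z with (- (n mod c) + - (n / c) * c)%Z
    by (pose proof (Z_div_mod_eq_full n c); lia).
  rewrite ext_class_shift. unfold opp; simpl; unfold ext_opp; simpl.
  now rewrite opp_add, zmul_opp.
Qed.

#[local] Instance ext_abelian : abelian_group ext_group.
Proof.
  constructor.
  - intros x y z.
    destruct (ext_class_surj x) as (h1 & n1 & ->), (ext_class_surj y) as (h2 & n2 & ->),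
      (ext_class_surj z) as (h3 & n3 & ->).
    rewrite !ext_class_add, add_assoc. f_equal; lia.
  - intros x y.
    destruct (ext_class_surj x) as (h1 & n1 & ->), (ext_class_surj y) as (h2 & n2 & ->).
    rewrite !ext_class_add, add_comm. f_equal; lia.
  - intros x. destruct (ext_class_surj x) as (h & n & ->).
    change (@add ext_group (ext_class zero 0) (ext_class h n) = ext_class h n).
    now rewrite ext_class_add, add_0_l.
  - intros x. destruct (ext_class_surj x) as (h & n & ->).
    now rewrite ext_class_opp, ext_class_add, add_opp_l, Z.add_opp_diag_l.
Qed.

Lemma ext_slice_open (r0 : Z) (V : H -> Prop) :
  opens V -> ext_open (fun z => ext_r z = r0 /\ V (ext_h z)).
Proof.
  intros OV r pr; simpl.
  pose proof (LCA_topology _ HH). apply open_inter; auto. now apply open_const.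
Qed.

Lemma ext_residue_open (r0 : Z) : ext_open (fun z => ext_r z = r0).
Proof. intros r pr; simpl. apply open_const, LCA_topology; auto. Qed.

Lemma ext_topology : is_topology ext_open.
Proof.
  pose proof (LCA_topology _ HH) as HT.
  split; [|split].
  - intros r pr. apply open_full; auto.
  - intros Fam HF r pr.
    eapply open_ext;
      [apply HT with (Fam := fun V => exists U, Fam U /\ V = fun h => U (mk_ext h r pr))|].
    + intros V [U [FU ->]]. apply HF; auto.
    + intro h; split.
      * intros [V [[U [FU ->]] HV]]. exists U; auto.
      * intros [U [FU HU]]. exists (fun h => U (mk_ext h r pr)). split; auto. exists U; auto.
  - intros U V HU HV r pr. apply open_inter; auto.
Qed.

Lemma ext_hausdorff : hausdorff ext_open.
Proof.
  intros p q npq.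
  destruct (Z.eq_dec (ext_r p) (ext_r q)) as [E|nE].
  - assert (nh : ext_h p <> ext_h q) by (intro E'; apply npq, ext_eq; auto).
    destruct (LCA_hausdorff _ HH _ _ nh) as [U [V [OU [OV [Up [Vq D]]]]]].
    exists (fun z => ext_r z = ext_r p /\ U (ext_h z)), (fun z => ext_r z = ext_r p /\ V (ext_h z)).
    repeat split; auto; try apply ext_slice_open; auto.
    intros z [_ Uz] [_ Vz]. eapply D; eauto.
  - exists (fun z => ext_r z = ext_r p), (fun z => ext_r z = ext_r q).
    repeat split; try apply ext_residue_open.
    congruence.
Qed.

Lemma ext_add_continuous (W : ext_carrier -> Prop) :
  ext_open W -> prod_open ext_open ext_open (fun p => W (ext_add (fst p) (snd p))).
Proof.
  intros OW [p q] Wpq. simpl in Wpq.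
  set (r := (ext_r p + ext_r q)%Z) in *.
  pose (S := fun h => W (mk_ext (add h (zmul (r / c) u)) (r mod c) (Zmod_mod r c))).
  assert (OS : opens S) by exact (translate_open _ HH _ (zmul (r / c) u) (OW _ _)).
  destruct (LCA_add_continuous _ HH S OS (ext_h p, ext_h q) Wpq)
    as [A [B [OA [OB [Ap [Bq HAB]]]]]].
  exists (fun z => ext_r z = ext_r p /\ A (ext_h z)), (fun z => ext_r z = ext_r q /\ B (ext_h z)).
  repeat split; auto; try apply ext_slice_open; auto.
  intros a b [Ea Aa] [Eb Bb]. simpl. unfold ext_add. rewrite Ea, Eb. apply (HAB _ _ Aa Bb).
Qed.

Lemma ext_opp_continuous (W : ext_carrier -> Prop) :
  ext_open W -> ext_open (fun z => W (ext_opp z)).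
Proof.
  intros OW r pr.
  pose (S := fun h => W (mk_ext (add h (zmul (- r / c) u)) (- r mod c) (Zmod_mod (- r) c))).
  assert (OS : opens S) by exact (translate_open _ HH _ (zmul (- r / c) u) (OW _ _)).
  apply (LCA_opp_continuous _ HH S OS).
Qed.

Lemma ext_locally_compact : locally_compact ext_open.
Proof.
  intros p. destruct (LCA_locally_compact _ HH (ext_h p)) as [U [K [OU [Up [sUK CK]]]]].
  exists (fun z => ext_r z = ext_r p /\ U (ext_h z)),
         (fun z => exists h, K h /\ z = mk_ext h (ext_r p) (ext_reduced p)).
  repeat split; auto; try apply ext_slice_open; auto.
  - intros z [E Uz]. exists (ext_h z). split; [now apply sUK|now apply ext_eq].
  - apply compact_image with (OA := @opens H); auto.
Qed.

Lemma ext_LCA : is_LCA ext_group.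
Proof.
  destruct ext_abelian as [assoc comm zero_l opp_l].
  exact (conj assoc (conj comm (conj zero_l (conj opp_l (conj ext_topology
    (conj ext_hausdorff (conj ext_add_continuous (conj ext_opp_continuous
    ext_locally_compact)))))))).
Qed.

Definition ext_slice0 (W : H -> Prop) (z : ext_carrier) : Prop := ext_r z = 0%Z /\ W (ext_h z).

Lemma ext_slice0_precompact (W : H -> Prop) :
  precompact (@opens H) W -> precompact ext_open (ext_slice0 W).
Proof.
  intros HW.
  apply (precompact_of_compact _ _ ext_topology) with
    (K := fun z => exists h, closure (@opens H) W h /\ z = mk_ext h 0 (Zmod_0_l c)).
  { apply compact_image with (OA := @opens H); auto. }
  intros z Cz.
  assert (Rz : ext_r z = 0%Z).
  { destruct (Cz _ (ext_residue_open (ext_r z)) eq_refl) as [w [E [E0 _]]]. congruence. }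
  exists (ext_h z). split; [|now apply ext_eq].
  intros U OU Uz.
  destruct (Cz (fun w => ext_r w = 0%Z /\ U (ext_h w))) as [w [[_ Uw] [_ Ww]]].
  - now apply ext_slice_open.
  - now split.
  - exists (ext_h w); auto.
Qed.

Lemma ext_slice0_interior (W : H -> Prop) :
  nonempty_interior (@opens H) W -> nonempty_interior ext_open (ext_slice0 W).
Proof.
  intros [U [OU [[x Ux] sUW]]].
  exists (fun z => ext_r z = 0%Z /\ U (ext_h z)). split; [|split].
  - now apply ext_slice_open.
  - now exists (mk_ext x 0 (Zmod_0_l c)).
  - intros z [E Uz]. split; auto.
Qed.
End Extension.

(** * Adjoining a point to the lattice *)

Lemma subgroup_zmul {G H : TopAbGroup} `{abelian_group G} `{abelian_group H}
  (L : G * H -> Prop) (x : G) (h : H) (k : Z) :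
  is_subgroup G H L -> L (x, h) -> L (zmul k x, zmul k h).
Proof.
  intros [L0 [Ladd Lopp]] Lxh.
  induction k using Z.peano_ind.
  - exact L0.
  - rewrite <- Z.add_1_r, !zmul_succ. apply (Ladd (_, _) (_, _) IHk Lxh).
  - rewrite <- Z.sub_1_r, !zmul_pred. apply (Ladd (_, _) (_, _) IHk (Lopp (_, _) Lxh)).
Qed.

Lemma cocompact_image (G1 H1 G2 H2 : TopAbGroup) (L1 : G1 * H1 -> Prop)
  (L2 : G2 * H2 -> Prop) (phi : G1 * H1 -> G2 * H2) :
  (forall U, GH_open G2 H2 U -> GH_open G1 H1 (fun p => U (phi p))) ->
  (forall p q, phi (pair_add G1 H1 p q) = pair_add G2 H2 (phi p) (phi q)) ->
  (forall l, L1 l -> L2 (phi l)) ->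
  (forall q, exists p l, L2 l /\ q = pair_add G2 H2 (phi p) l) ->
  cocompact G1 H1 L1 -> cocompact G2 H2 L2.
Proof.
  intros Hcont Hadd HL12 Hdec HL1 Fam HF Hcov.
  destruct (HL1 (fun V => exists U, Fam U /\ V = fun p => U (phi p))) as [l [Hl Hlcov]].
  - intros V [U [FU ->]]. destruct (HF U FU) as [OU SU]. split; auto.
    intros p m Up Lm. rewrite Hadd. auto.
  - intros p. destruct (Hcov (phi p)) as [U [FU Up]].
    exists (fun p => U (phi p)). split; auto. exists U; auto.
  - destruct (list_choice Fam (fun U V => V = fun p => U (phi p)) l) as [l' [Hl' Hl'l]].
    { intros V HV. destruct (Hl V HV) as [U [? ?]]. exists U; auto. }
    exists l'. split; auto. intros q.
    destruct (Hdec q) as [p [m [Lm ->]]].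
    destruct (Hlcov p) as [V [inV Vp]]. destruct (Hl'l V inV) as [U [inU ->]].
    exists U. split; auto. apply (proj2 (HF U (Hl' U inU))); auto.
Qed.

Definition pi1 {G H : TopAbGroup} (L : G * H -> Prop) (x : G) : Prop := exists h, L (x, h).

Section AdjoinPoint.
Variables G H : TopAbGroup.
Hypothesis HG : is_LCA G.
Variable L : G * H -> Prop.
Hypothesis HL : cut_and_project_scheme G H L.
Variable f : G.
Variable c : Z.
Hypothesis Hc : forall n, pi1 L (zmul n f) -> (c | n)%Z.
Variable u : H.
Hypothesis Hu : L (zmul c f, u).

Let HH : is_LCA H := proj1 HL.
Let L_subgroup : is_subgroup G H L := proj1 (proj2 HL).
Let L_discrete : discrete_sub G H L := proj1 (proj2 (proj2 HL)).
Let L_cocompact : cocompact G H L := proj1 (proj2 (proj2 (proj2 HL))).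
Let L_injective : forall p q, L p -> L q -> fst p = fst q -> p = q :=
  proj1 (proj2 (proj2 (proj2 (proj2 HL)))).
Let L_dense : dense (@opens H) (fun h => exists l, L l /\ snd l = h) :=
  proj2 (proj2 (proj2 (proj2 (proj2 HL)))).
#[local] Instance G_abelian : abelian_group G := LCA_abelian_group G HG.
#[local] Instance H_abelian : abelian_group H := LCA_abelian_group H HH.

Lemma L_fiber_zmul (n : Z) (h : H) :
  L (zmul n f, h) -> exists k, n = (k * c)%Z /\ h = zmul k u.
Proof.
  intros Lnh. destruct (Hc n (ex_intro _ h Lnh)) as [k ->]. exists k. split; auto.
  assert (Lk : L (zmul k (zmul c f), zmul k u)) by now apply subgroup_zmul.
  rewrite <- zmul_mul in Lk.
  now injection (L_injective _ _ Lnh Lk eq_refl).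
Qed.

Lemma u_zero_of_c_zero : c = 0%Z -> u = zero.
Proof. intros ->. now injection (L_injective _ _ Hu (proj1 L_subgroup) eq_refl). Qed.

Local Notation E := (ext_group H c u).
Local Notation cls := (ext_class H c u).
Let cls_add := ext_class_add H HH c u u_zero_of_c_zero.
Let cls_opp := ext_class_opp H HH c u u_zero_of_c_zero.
Let cls_shift := ext_class_shift H HH c u u_zero_of_c_zero.

Definition ext_lattice (p : G * E) : Prop :=
  exists x h n, L (x, h) /\ fst p = add x (zmul n f) /\ snd p = cls h n.

Lemma ext_lattice_of_L (x : G) (h : H) : L (x, h) -> ext_lattice (x, cls h 0).
Proof. intros Lxh. exists x, h, 0%Z. repeat split; auto. symmetry; apply add_0_r. Qed.

Lemma ext_lattice_subgroup : is_subgroup G E ext_lattice.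
Proof.
  destruct L_subgroup as [L0 [Ladd Lopp]].
  split; [|split].
  - apply ext_lattice_of_L, L0.
  - intros [y1 z1] [y2 z2] (x1 & h1 & n1 & L1 & E1 & F1) (x2 & h2 & n2 & L2 & E2 & F2).
    simpl in *. subst.
    exists (add x1 x2), (add h1 h2), (n1 + n2)%Z. repeat split.
    + apply (Ladd (_, _) (_, _) L1 L2).
    + simpl. now rewrite zmul_add, add_shuffle1.
    + apply cls_add.
  - intros [y z] (x & h & n & Lxh & E1 & F1). simpl in *. subst.
    exists (opp x), (opp h), (- n)%Z. repeat split.
    + apply (Lopp (_, _) Lxh).
    + simpl. now rewrite zmul_opp, opp_add.
    + apply cls_opp.
Qed.

Lemma ext_lattice_injective (p q : G * E) :
  ext_lattice p -> ext_lattice q -> fst p = fst q -> p = q.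
Proof.
  destruct L_subgroup as [L0 [Ladd Lopp]].
  destruct p as [y1 z1], q as [y2 z2].
  intros (x1 & h1 & n1 & L1 & E1 & F1) (x2 & h2 & n2 & L2 & E2 & F2) Ey.
  simpl in *. subst. f_equal; auto.
  assert (Ldiff : L (add x2 (opp x1), add h2 (opp h1)))
    by apply (Ladd (_, _) (_, _) L2 (Lopp (_, _) L1)).
  rewrite <- (add_eq_sub_swap _ _ _ _ Ey), <- zmul_opp, <- zmul_add in Ldiff.
  destruct (L_fiber_zmul _ _ Ldiff) as [k [Ek Eh]].
  replace n1 with (n2 + k * c)%Z by lia.
  rewrite cls_shift, <- Eh, (add_comm h2), add_assoc, add_opp_r, add_0_l. reflexivity.
Qed.

Lemma ext_lattice_rebase (x : G) (h : H) (n k : Z) :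
  L (x, h) ->
  L (add x (zmul (k * c) f), add h (zmul k u)) /\
  add x (zmul (n + k * c) f) = add (add x (zmul (k * c) f)) (zmul n f) /\
  cls h (n + k * c) = cls (add h (zmul k u)) n.
Proof.
  intros Lxh. repeat split.
  - refine (proj1 (proj2 L_subgroup) (x, h) (zmul (k * c) f, zmul k u) Lxh _).
    rewrite zmul_mul. now apply subgroup_zmul.
  - now rewrite zmul_add, add_shuffle0, add_assoc.
  - apply cls_shift.
Qed.

Lemma ext_lattice_discrete : discrete_sub G E ext_lattice.
Proof.
  intros [y z] (x & h & n & Lxh & Ey & Ez). simpl in Ey, Ez. subst.
  destruct (L_discrete (x, h) Lxh) as [U [OU [Ux Iso]]].
  destruct (OU (x, h) Ux) as [A [B [OA [OB [Ax [Bh HAB]]]]]].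
  pose (A' := fun g => A (add g (opp (zmul n f)))).
  pose (B' := fun w : E => ext_r H c w = (n mod c)%Z /\
                           B (add (ext_h H c w) (opp (zmul (n / c) u)))).
  assert (OA' : opens A') by now apply translate_open.
  assert (OB' : ext_open H c B')
    by exact (ext_slice_open H HH c _ _ (translate_open _ HH B _ OB)).
  exists (fun q => A' (fst q) /\ B' (snd q)). split; [|split].
  - intros q [Aq Bq]. exists A', B'.
    do 4 (split; [assumption|]). now split.
  - unfold A', B'; simpl. now rewrite !add_sub_cancel.
  - intros [y' z'] (x' & h' & n' & Lx' & Ey & Ez) [Ay [Rz Bz]].
    simpl in Ey, Ez, Ay, Rz, Bz. subst.
    (* Same residue: the nearby point is a point of L near (x, h), shifted by k (c f, u). *)
    destruct (proj1 (Z.cong_iff_ex n' n c) Rz) as [k Ek].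
    replace n' with (n + k * c)%Z in * by lia.
    destruct (ext_lattice_rebase x' h' n k Lx') as (Lk & Ex & Eh).
    rewrite Ex in Ay |- *. rewrite Eh in Bz |- *. unfold A' in Ay. simpl in Bz.
    rewrite add_sub_cancel in Ay. rewrite add_sub_cancel in Bz.
    assert (Ek' : (add x' (zmul (k * c) f), add h' (zmul k u)) = (x, h)) by (apply Iso; auto).
    now injection Ek' as -> ->.
Qed.

Definition ext_embed (q : G * H) : G * E := (fst q, cls (snd q) 0).

Lemma ext_embed_open (U : G * E -> Prop) :
  GH_open G E U -> GH_open G H (fun q => U (ext_embed q)).
Proof.
  intros OU q Uq. destruct (OU _ Uq) as [A [B [OA [OB [Aq [Bq HAB]]]]]].
  exists A, (fun h => B (cls h 0)). repeat split; auto.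
  - exact (translate_open _ HH _ (zmul (0 / c) u) (OB _ _)).
  - intros a b Aa Bb. now apply HAB.
Qed.

Lemma ext_embed_add (p q : G * H) :
  ext_embed (pair_add G H p q) = pair_add G E (ext_embed p) (ext_embed q).
Proof. unfold ext_embed, pair_add; cbn [fst snd]. now rewrite cls_add. Qed.

Lemma ext_lattice_decompose (p : G * E) :
  exists q l, ext_lattice l /\ p = pair_add G E (ext_embed q) l.
Proof.
  destruct p as [g z].
  set (r := ext_r H c z).
  exists (add g (opp (zmul r f)), ext_h H c z), (zmul r f, cls zero r).
  split.
  - exists zero, zero, r. repeat split; auto. apply (proj1 L_subgroup).
    symmetry; apply add_0_l.
  - unfold pair_add, ext_embed; cbn [fst snd].
    now rewrite sub_add_cancel, cls_add, add_0_r, ext_class_repr.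
Qed.

Lemma ext_lattice_cocompact : cocompact G E ext_lattice.
Proof.
  apply (cocompact_image G H G E L ext_lattice ext_embed); auto using ext_embed_open,
    ext_embed_add, ext_lattice_decompose.
  intros [x h] Lxh. now apply ext_lattice_of_L.
Qed.

Lemma ext_lattice_dense : dense (@opens E) (fun z => exists l, ext_lattice l /\ snd l = z).
Proof.
  intros S OS [[h r pr] Sp].
  destruct (L_dense _ (OS r pr)) as [y [Sy [[x y'] [Lxy Ey]]]]; [now exists h|].
  simpl in Ey. subst y'.
  exists (mk_ext H c y r pr). split; auto.
  exists (add x (zmul r f), cls y r). split.
  - now exists x, y, r.
  - exact (ext_class_repr H HH c u (mk_ext H c y r pr)).
Qed.

Lemma ext_lattice_cps : cut_and_project_scheme G E ext_lattice.
Proof.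
  exact (conj (ext_LCA H HH c u u_zero_of_c_zero) (conj ext_lattice_subgroup
    (conj ext_lattice_discrete (conj ext_lattice_cocompact
    (conj ext_lattice_injective ext_lattice_dense))))).
Qed.
End AdjoinPoint.

Definition admissible_window (G H : TopAbGroup) (L : G * H -> Prop) (W : H -> Prop) : Prop :=
  cut_and_project_scheme G H L /\ precompact (@opens H) W /\ nonempty_interior (@opens H) W.

Lemma adjoin_point (G H : TopAbGroup) (HG : is_LCA G) (L : G * H -> Prop) (W : H -> Prop)
  (f : G) :
  admissible_window G H L W ->
  exists (H' : TopAbGroup) (L' : G * H' -> Prop) (W' : H' -> Prop),
    admissible_window G H' L' W' /\
    subset (model_set_of G H L W) (model_set_of G H' L' W') /\
    pi1 L' f /\ subset (pi1 L) (pi1 L').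
Proof.
  intros (HL & HW & HWi).
  pose proof (LCA_abelian_group G HG). pose proof (LCA_abelian_group H (proj1 HL)).
  destruct (proj1 (proj2 HL)) as [L0 [Ladd Lopp]].
  destruct (Z_subgroup_multiples (fun n => pi1 L (zmul n f))) as [c [_ Hc]].
  - exists zero. exact L0.
  - intros a b [ha La] [hb Lb]. exists (add ha (opp hb)).
    rewrite <- Z.add_opp_r, zmul_add, zmul_opp.
    apply (Ladd (_, _) (_, _) La (Lopp (_, _) Lb)).
  - destruct (proj2 (Hc c) (Z.divide_refl c)) as [u Hu].
    exists (ext_group H c u), (ext_lattice G H L f c u), (ext_slice0 H c W).
    split; [|split; [|split]].
    + split; [apply ext_lattice_cps; auto; intros n; apply Hc|].
      split; [apply ext_slice0_precompact|apply ext_slice0_interior]; auto; apply HL.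
    + intros x [[y h] [Lyh [Ey Wh]]]. simpl in Ey. subst y.
      exists (x, ext_class H c u h 0). split; [now apply ext_lattice_of_L|].
      split; auto. split; auto. simpl. now rewrite add_0_r.
    + exists (ext_class H c u zero 1), zero, zero, 1%Z. repeat split; auto.
      simpl. now rewrite !add_0_l.
    + intros x [h Lxh]. exists (ext_class H c u h 0). now apply ext_lattice_of_L.
Qed.

Lemma adjoin_points (G : TopAbGroup) (HG : is_LCA G) (Lam : G -> Prop) (l : list G) :
  subset_of_model_set G Lam ->
  exists (H : TopAbGroup) (L : G * H -> Prop) (W : H -> Prop),
    admissible_window G H L W /\ subset Lam (model_set_of G H L W) /\
    (forall f, In f l -> pi1 L f).
Proof.
  intros HLam. induction l as [|f l IH].
  - destruct HLam as [M [[H [L [W [HL [HW [HWi HM]]]]]] sLM]].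
    exists H, L, W. split; [now split|split].
    + intros x Lx. apply HM, sLM, Lx.
    + intros f [].
  - destruct IH as [H [L [W [HLW [sub Hl]]]]].
    destruct (adjoin_point G H HG L W f HLW) as [H' [L' [W' [HLW' [sub' [Hf sL]]]]]].
    exists H', L', W'. split; [auto|split].
    + intros x Lx. apply sub', sub, Lx.
    + intros g [<-|Hg]; auto.
Qed.

Lemma sumset_model_set (G H : TopAbGroup) (L : G * H -> Prop) (W : H -> Prop)
  (Lam : G -> Prop) (lF : list G) (f0 : G) :
  admissible_window G H L W -> subset Lam (model_set_of G H L W) ->
  (forall f, In f lF -> pi1 L f) -> In f0 lF ->
  subset_of_model_set G (sumset G Lam (fun f => In f lF)).
Proof.
  intros (HL & HW & HWi) sub HlF Hf0.
  assert (HH : is_LCA H) by apply HL.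
  pose proof (LCA_abelian_group H HH).
  destruct (list_choice (fun _ : H => True) (fun t f => L (f, t)) lF) as [stars [_ Hstars]].
  { intros f Hf. destruct (HlF f Hf) as [h Lh]. exists h; auto. }
  exists (model_set_of G H L (translates_union W stars)). split.
  - exists H, L, (translates_union W stars). split; [|split; [|split]]; auto.
    + now apply translates_union_precompact.
    + destruct (Hstars f0 Hf0) as [t0 [Ht0 _]]. now apply (translates_union_interior _ HH _ _ t0).
    + tauto.
  - intros z [x [y [Lx [Fy ->]]]].
    destruct (sub x Lx) as [[x' hx] [Lxh [Ex Wh]]]. simpl in Ex. subst x'.
    destruct (Hstars y Fy) as [t [Ht Lyt]].
    exists (add x y, add hx t). repeat split.
    + apply (proj1 (proj2 (proj1 (proj2 HL))) (_, _) (_, _) Lxh Lyt).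
    + exists t. split; auto. simpl. now rewrite add_sub_cancel.
Qed.

Theorem proposition6p17 (G : TopAbGroup) (HG : is_LCA G)
  (Hsig : sigma_compact (@opens G))
  (Lam : G -> Prop) (F : G -> Prop)
  (HLam : @subset_of_model_set G Lam)
  (HFfin : finite_set F) (HFne : exists f, F f) :
  @subset_of_model_set G (@sumset G Lam F).
Proof.
  destruct HFfin as [lF HF], HFne as [f0 Ff0].
  replace F with (fun f => In f lF) by (apply pred_ext; intros; symmetry; apply HF).
  destruct (adjoin_points G HG Lam lF HLam) as [H [L [W [HLW [sub Hpi1]]]]].
  apply (sumset_model_set G H L W Lam lF f0); auto. now apply HF.
Qed.
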